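(* Suppose that for the given $n$, $\theta_{n,1}\ge\theta_{n,2}\ge\cdots\ge\theta_{n,M_n}$. Then $$\min_{\mathbf w\in\mathcal W_n}R_n(\mathbf w)=\mathrm{tr}(\mathbf P_1\boldsymbol\Omega)+\sum_{m=2}^{M_n}\frac{a_m b_m}{a_m+b_m}+\boldsymbol\mu^\top(\mathbf I_n-\mathbf P_{M_n})\boldsymbol\mu,$$ attained at $w_m=\gamma_m-\gamma_{m+1}$ ($m<M_n$), $w_{M_n}=\gamma_{M_n}$, with $\gamma_1=1$ and $\gamma_m=a_m/(a_m+b_m)$ for $m\ge2$; $$\min_{\mathbf w\in\mathcal Q_n}R_n(\mathbf w)=\sum_{m=1}^{M_n}\frac{a_m b_m}{a_m+b_m}+\boldsymbol\mu^\top(\mathbf I_n-\mathbf P_{M_n})\boldsymbol\mu;$$ and consequently $$\min_{\mathcal W_n}R_n-\min_{\mathcal Q_n}R_n=\frac{\{\mathrm{tr}(\mathbf P_1\boldsymbol\Omega)\}^2}{\boldsymbol\mu^\top\mathbf P_1\boldsymbol\mu+\mathrm{tr}(\mathbf P_1\boldsymbol\Omega)}\le\mathrm{tr}(\mathbf P_1\boldsymbol\Omega).$$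
   Context: Fix $n$. Let $\mathbf y=\boldsymbol\mu+\boldsymbol\varepsilon\in\mathbb R^n$ with $\boldsymbol\mu$ deterministic, $E\boldsymbol\varepsilon=\mathbf 0$, $\mathrm{Cov}(\boldsymbol\varepsilon)=\boldsymbol\Omega$ positive definite. Let $\mathbf X$ be a nonstochastic $n\times p$ matrix, integers $0=\nu_0<\nu_1<\cdots<\nu_{M_n}\le p$ with $M_n\ge2$, $\mathbf X_m$ the first $\nu_m$ columns of $\mathbf X$ (full column rank), $\mathbf P_m=\mathbf X_m(\mathbf X_m^\top\mathbf X_m)^{-1}\mathbf X_m^\top$, $\mathbf P_0=\mathbf 0$. For $\mathbf w\in\mathbb R^{M_n}$, $R_n(\mathbf w)=E\|\sum_{m=1}^{M_n}w_m\mathbf P_m\mathbf y-\boldsymbol\mu\|^2$. $\mathcal W_n=\{\mathbf w\in[0,1]^{M_n}:\sum_m w_m=1\}$, $\mathcal Q_n=[0,1]^{M_n}$. Write $a_m=\boldsymbol\mu^\top(\mathbf P_m-\mathbf P_{m-1})\boldsymbol\mu$, $b_m=\mathrm{tr}\{(\mathbf P_m-\mathbf P_{m-1})\boldsymbol\Omega\}$ and $\theta_{n,m}=a_m/(n b_m)$. *)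

From HB Require Import structures.
From mathcomp Require Import all_boot all_order all_algebra.
From mathcomp Require Import all_classical all_reals all_analysis.
Set Implicit Arguments. Unset Strict Implicit. Unset Printing Implicit Defensive.
Import Order.TTheory GRing.Theory Num.Theory.
Local Open Scope ring_scope.

(* The n x k matrix formed by the first k columns of X : 'M_(n,p)
   (columns beyond p, never used under the hypotheses nu_M <= p, are 0). *)
Definition first_cols (R : realType) (n p k : nat) (X : 'M[R]_(n, p)) : 'M[R]_(n, k) :=
  \matrix_(i < n, j < k)
    (if (insub (val j) : option 'I_p) is Some j' then X i j' else 0).

Definition hat_mx (R : realType) (n p k : nat) (X : 'M[R]_(n, p)) : 'M[R]_n :=
  let A := first_cols k X in A *m invmx (A^T *m A) *m A^T.

Definition Pm (R : realType) (n p : nat) (X : 'M[R]_(n, p)) (nu : nat -> nat)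
  (m : nat) : 'M[R]_n :=
  if m is 0 then 0 else hat_mx (nu m) X.

Definition a_m (R : realType) (n p : nat) (X : 'M[R]_(n, p)) (nu : nat -> nat)
  (mu : 'cV[R]_n) (m : nat) : R :=
  (mu^T *m (Pm X nu m - Pm X nu m.-1) *m mu) 0 0.

Definition b_m (R : realType) (n p : nat) (X : 'M[R]_(n, p)) (nu : nat -> nat)
  (Om : 'M[R]_n) (m : nat) : R :=
  \tr ((Pm X nu m - Pm X nu m.-1) *m Om).

Definition theta (R : realType) (n p : nat) (X : 'M[R]_(n, p)) (nu : nat -> nat)
  (mu : 'cV[R]_n) (Om : 'M[R]_n) (m : nat) : R :=
  a_m X nu mu m / (n%:R * b_m X nu Om m).

Definition yvec (R : realType) d (T : measurableType d) (P : probability T R)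
  (n : nat) (mu : 'cV[R]_n) (eps : 'I_n -> {RV P >-> R}) (om : T) : 'cV[R]_n :=
  mu + \col_i (eps i om).

Definition avg_est (R : realType) (n p : nat) (X : 'M[R]_(n, p)) (nu : nat -> nat)
  (M : nat) (w : nat -> R) (y : 'cV[R]_n) : 'cV[R]_n :=
  \sum_(1 <= m < M.+1) (w m *: (Pm X nu m *m y)).

Definition risk (R : realType) d (T : measurableType d) (P : probability T R)
  (n p : nat) (X : 'M[R]_(n, p)) (nu : nat -> nat) (M : nat)
  (mu : 'cV[R]_n) (eps : 'I_n -> {RV P >-> R}) (w : nat -> R) : \bar R :=
  ('E_P[(fun om => (\sum_(i < n)
         ((avg_est X nu M w (yvec mu eps om) - mu) i 0) ^+ 2)%R)])%E.

(* W_n: weights in [0,1]^M summing to one (only w_1..w_M matter). *)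
Definition inW (R : realType) (M : nat) (w : nat -> R) : Prop :=
  (forall m, (1 <= m <= M)%N -> 0 <= w m <= 1) /\ \sum_(1 <= m < M.+1) w m = 1.

Definition inQ (R : realType) (M : nat) (w : nat -> R) : Prop :=
  forall m, (1 <= m <= M)%N -> 0 <= w m <= 1.

Definition gam (R : realType) (n p : nat) (X : 'M[R]_(n, p)) (nu : nat -> nat)
  (mu : 'cV[R]_n) (Om : 'M[R]_n) (m : nat) : R :=
  if (m <= 1)%N then 1
  else a_m X nu mu m / (a_m X nu mu m + b_m X nu Om m).

Definition wstar (R : realType) (n p : nat) (X : 'M[R]_(n, p)) (nu : nat -> nat)
  (mu : 'cV[R]_n) (Om : 'M[R]_n) (M : nat) (m : nat) : R :=
  if (m < M)%N then gam X nu mu Om m - gam X nu mu Om m.+1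
  else gam X nu mu Om M.

From mathcomp Require Import all_boot all_order all_algebra.
From mathcomp Require Import all_classical all_reals all_analysis.
From mathcomp Require Import zify ring lra.
Import Order.TTheory GRing.Theory Num.Theory.
Local Open Scope ring_scope.
Set Implicit Arguments. Unset Strict Implicit. Unset Printing Implicit Defensive.

(* The increments P_k - P_(k-1) (1 <= k <= M) and I - P_M are pairwise
   orthogonal projections summing to the identity.  Summation by parts writes
   sum_m w_m P_m as sum_k g_k (P_k - P_(k-1)) with tail sums g_k = sum_(m >= k) w_m,
   so the risk separates into
     sum_k ((1 - g_k)^2 a_k + g_k^2 b_k) + mu^T (I - P_M) mu.
   Each summand is minimised at g_k = a_k / (a_k + b_k) with value
   a_k b_k / (a_k + b_k).  The ordering of theta makes these minimisers
   nonincreasing in k, so they are the tail sums of weights in [0,1]^M.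
   On W_n the constraint g_1 = 1 only replaces the first summand by
   b_1 = tr(P_1 Omega). *)

Section GramMatrix.
Variable R : realFieldType.

Lemma rowv_mulmx_tr_eq0 k (u : 'rV[R]_k) : (u *m u^T) 0 0 = 0 -> u = 0.
Proof.
rewrite mxE => /eqP; rewrite psumr_eq0 => [/allP u0|j _]; last first.
  by rewrite !mxE -expr2 sqr_ge0.
apply/rowP => j; rewrite mxE; apply/eqP.
by have := u0 j (mem_index_enum j); rewrite !mxE -expr2 sqrf_eq0.
Qed.

Lemma gram_unitmx n k (A : 'M[R]_(n, k)) : \rank A = k -> A^T *m A \in unitmx.
Proof.
move=> rA; rewrite -row_free_unit; apply: contraT => nfree.
have /rowV0Pn[v /sub_kermxP vK v0] : kermx (A^T *m A) != 0.
  by rewrite -mxrank_eq0 mxrank_ker subn_eq0 -ltnNge ltn_neqAle nfree rank_leq_row.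
have vA : v *m A^T = 0.
  apply: rowv_mulmx_tr_eq0.
  by rewrite trmx_mul trmxK mulmxA -(mulmxA v) vK mul0mx mxE.
have freeAT : row_free A^T by rewrite /row_free mxrank_tr rA.
by move: v0; rewrite -(mulmx_free_eq0 v freeAT) vA eqxx.
Qed.

End GramMatrix.

Section HatMatrix.
Variables (R : realType) (n p : nat) (X : 'M[R]_(n, p)).

Lemma first_cols_widen j k : (j <= k)%N ->
  first_cols j X = first_cols k X *m pid_mx j.
Proof.
move=> jk; apply/matrixP => i l; rewrite !mxE (bigD1 (widen_ord jk l)) //=.
rewrite big1 => [|l' /negbTE neq]; last first.
  rewrite !mxE -[_ == _ :> nat]/(l' == widen_ord jk l) neq mulr0 //.
by rewrite !mxE eqxx /= ltn_ord mulr1 addr0.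
Qed.

Lemma trmx_hat_mx k : (hat_mx k X)^T = hat_mx k X.
Proof. by rewrite /hat_mx !trmx_mul trmx_inv trmx_mul trmxK mulmxA. Qed.

Lemma hat_mx_first_cols k : \rank (first_cols k X) = k ->
  hat_mx k X *m first_cols k X = first_cols k X.
Proof. by move=> rk; rewrite /hat_mx -!mulmxA mulVmx ?mulmx1 ?gram_unitmx. Qed.

Lemma hat_mx_nested j k : (j <= k)%N -> \rank (first_cols k X) = k ->
  hat_mx k X *m hat_mx j X = hat_mx j X.
Proof.
move=> jk rk.
have fix_j : hat_mx k X *m first_cols j X = first_cols j X.
  by rewrite (first_cols_widen jk) mulmxA hat_mx_first_cols.
by rewrite [hat_mx j X]/hat_mx !mulmxA fix_j.
Qed.

Lemma rank_hat_mx k : (\rank (hat_mx k X) <= k)%N.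
Proof.
by apply: leq_trans (mxrankM_maxr _ _) _; rewrite mxrank_tr rank_leq_col.
Qed.

End HatMatrix.

Section OrthogonalProjection.
Variables (R : realFieldType) (n : nat) (D : 'M[R]_n).
Hypotheses (D_sym : D^T = D) (D_idem : D *m D = D).

Lemma form_proj_ge0 (x : 'cV[R]_n) : 0 <= (x^T *m D *m x) 0 0.
Proof.
have -> : (x^T *m D *m x) 0 0 = ((D *m x)^T *m (D *m x)) 0 0.
  by rewrite trmx_mul D_sym mulmxA -(mulmxA _ D D) D_idem.
by rewrite mxE; apply: sumr_ge0 => j _; rewrite mxE -expr2 sqr_ge0.
Qed.

Lemma mxtrace_proj_mul_gt0 (Om : 'M[R]_n) : D != 0 ->
  (forall x : 'cV[R]_n, x != 0 -> 0 < (x^T *m Om *m x) 0 0) ->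
  0 < \tr (D *m Om).
Proof.
move=> D0 Om_pd.
have Om_row i : row i D != 0 -> 0 < (row i D *m Om *m (row i D)^T) 0 0.
  by move=> Di; have := Om_pd (row i D)^T; rewrite trmxK trmx_eq0; apply.
have -> : \tr (D *m Om) = \sum_i (row i D *m Om *m (row i D)^T) 0 0.
  rewrite -{1}D_idem -mulmxA mxtrace_mulC -{2}D_sym /mxtrace.
  apply: eq_bigr => i _; rewrite [LHS]mxE [RHS]mxE.
  by apply: eq_bigr => j _; rewrite -row_mul !mxE.
have [i Di] : exists i, row i D != 0.
  apply/existsP; move: D0; apply: contraR; rewrite negb_exists => /forallP D0.
  by apply/eqP/row_matrixP => i; rewrite row0; apply/eqP/negbNE/D0.
rewrite (bigD1 i) //= ltr_pwDl ?Om_row // sumr_ge0 // => j _.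
by have [->|Dj] := eqVneq (row j D) 0; [rewrite !mul0mx mxE | exact/ltW/Om_row].
Qed.

End OrthogonalProjection.

Section ScalarBounds.
Variable R : realFieldType.
Implicit Types a b x : R.

Lemma harmonic_le_quad a b x : 0 <= a -> 0 < b ->
  a * b / (a + b) <= (1 - x) ^+ 2 * a + x ^+ 2 * b.
Proof.
move=> a_ge0 b_gt0; rewrite ler_pdivrMr; last lra.
have := sqr_ge0 (x * (a + b) - a); nra.
Qed.

Lemma quad_at_ratio a b : 0 <= a -> 0 < b ->
  (1 - a / (a + b)) ^+ 2 * a + (a / (a + b)) ^+ 2 * b = a * b / (a + b).
Proof.
move=> a_ge0 b_gt0; have ab_neq0 : a + b != 0 by rewrite gt_eqF //; lra.
by field.
Qed.

Lemma ratio_in01 a b : 0 <= a -> 0 < b -> 0 <= a / (a + b) <= 1.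
Proof.
move=> a_ge0 b_gt0; have ab_gt0 : 0 < a + b by lra.
by rewrite divr_ge0 ?ler_pdivrMr //=; lra.
Qed.

Lemma harmonic_gap a b : 0 <= a -> 0 < b -> b - a * b / (a + b) = b ^+ 2 / (a + b).
Proof.
move=> a_ge0 b_gt0; have ab_neq0 : a + b != 0 by rewrite gt_eqF //; lra.
by field.
Qed.

Lemma harmonic_gap_le a b : 0 <= a -> 0 < b -> b ^+ 2 / (a + b) <= b.
Proof. by move=> a_ge0 b_gt0; rewrite ler_pdivrMr; nra. Qed.

End ScalarBounds.

Lemma ratio_le_of_scaled (R : realFieldType) (N a b a' b' : R) :
  0 < N -> 0 < b -> 0 < b' -> 0 <= a -> 0 <= a' ->
  a' / (N * b') <= a / (N * b) -> a' / (a' + b') <= a / (a + b).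
Proof.
move=> N_gt0 b_gt0 b'_gt0 a_ge0 a'_ge0.
rewrite ler_pdivrMr ?mulr_gt0 // mulrAC ler_pdivlMr ?mulr_gt0 // => le_scaled.
have le_cross : a' * b <= a * b' by nra.
rewrite ler_pdivrMr; last lra.
rewrite mulrAC ler_pdivlMr; [nra | lra].
Qed.

Lemma increment_mul (R : pzRingType) n N (Q : nat -> 'M[R]_n) :
  (forall j k, (j <= N)%N -> (k <= N)%N -> Q j *m Q k = Q (minn j k)) ->
  forall j k, (1 <= j <= N)%N -> (1 <= k <= N)%N ->
  (Q j - Q j.-1) *m (Q k - Q k.-1) = if j == k then Q j - Q j.-1 else 0.
Proof.
move=> Qmin j k /andP[j1 jN] /andP[k1 kN].
rewrite mulmxBl !mulmxBr !Qmin; try lia.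
case: ltngtP => jk.
- have [-> -> ->] : [/\ minn j k.-1 = j, minn j.-1 k = j.-1
    & minn j.-1 k.-1 = j.-1] by split; lia.
  by rewrite !subrr.
- have [-> -> ->] : [/\ minn j k.-1 = k.-1, minn j.-1 k = k
    & minn j.-1 k.-1 = k.-1] by split; lia.
  by rewrite !subrr.
- rewrite -{}jk.
  have [-> ->] : minn j j.-1 = j.-1 /\ minn j.-1 j = j.-1 by split; lia.
  by rewrite minnn subrr subr0.
Qed.

Section NestedModels.
Variables (R : realType) (n p : nat) (X : 'M[R]_(n, p)) (nu : nat -> nat) (M : nat).
Hypotheses (nu_lt : forall m, (m < M)%N -> (nu m < nu m.+1)%N)
  (rank_cols : forall m, (1 <= m <= M)%N -> \rank (first_cols (nu m) X) = nu m).
Local Notation P := (Pm X nu).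

Lemma nu_monotone j k : (j <= k)%N -> (k <= M)%N -> (nu j <= nu k)%N.
Proof.
elim: k => [|k IH]; first by rewrite leqn0 => /eqP ->.
rewrite leq_eqVlt => /orP[/eqP -> //|jk] kM.
by apply: leq_trans (IH jk (ltnW kM)) (ltnW (nu_lt kM)).
Qed.

Lemma trmx_Pm k : (P k)^T = P k.
Proof. by case: k => [|k]; [rewrite trmx0 | exact: trmx_hat_mx]. Qed.

Lemma Pm_nested j k : (j <= k)%N -> (k <= M)%N -> P k *m P j = P j.
Proof.
case: j => [|j] jk kM; first by rewrite mulmx0.
case: k jk kM => [|k] // jk kM.
by apply: hat_mx_nested; [exact: nu_monotone | apply: rank_cols].
Qed.

Lemma Pm_mul j k : (j <= M)%N -> (k <= M)%N -> P j *m P k = P (minn j k).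
Proof.
move=> jM kM; case: (leqP j k) => [jk|/ltnW kj]; last exact: Pm_nested.
by rewrite -[LHS]trmxK trmx_mul !trmx_Pm Pm_nested // trmx_Pm.
Qed.

(* P_(M+1) := I, so that I - P_M is the increment Dm M.+1. *)
Definition Pm_ext k := if (k <= M)%N then P k else 1%:M.

Definition Dm k := Pm_ext k - Pm_ext k.-1.

Lemma Pm_ext_mul j k : (j <= M.+1)%N -> (k <= M.+1)%N ->
  Pm_ext j *m Pm_ext k = Pm_ext (minn j k).
Proof.
rewrite /Pm_ext geq_min => jM kM.
case: (leqP j M) => jM'; case: (leqP k M) => kM' /=.
- exact: Pm_mul.
- by rewrite mulmx1 (minn_idPl (ltnW (leq_ltn_trans jM' kM'))).
- by rewrite mul1mx (minn_idPr (ltnW (leq_ltn_trans kM' jM'))).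
- by rewrite mulmx1.
Qed.

Lemma Dm_mul j k : (1 <= j <= M.+1)%N -> (1 <= k <= M.+1)%N ->
  Dm j *m Dm k = if j == k then Dm j else 0.
Proof. exact: (increment_mul Pm_ext_mul). Qed.

Lemma trmx_Dm k : (Dm k)^T = Dm k.
Proof.
by rewrite /Dm /Pm_ext linearB /=; case: ifP; case: ifP; rewrite ?trmx1 ?trmx_Pm.
Qed.

Lemma sum_Dm : \sum_(1 <= k < M.+2) Dm k = 1%:M.
Proof.
by rewrite big_add1 /= telescope_sumr // /Pm_ext ltnn /= subr0.
Qed.

Lemma DmE k : (k <= M)%N -> Dm k = P k - P k.-1.
Proof. by move=> kM; rewrite /Dm /Pm_ext kM (leq_trans (leq_pred k) kM). Qed.

Lemma Dm_complement : Dm M.+1 = 1%:M - P M.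
Proof. by rewrite /Dm /Pm_ext ltnn leqnn. Qed.

Lemma Dm_neq0 k : (1 <= k <= M)%N -> Dm k != 0.
Proof.
case: k => [//|k] /andP[_ kM]; rewrite DmE // subr_eq0; apply/eqP => Pk.
have rk := rank_cols (m := k.+1); rewrite kM in rk; have {}rk := rk isT.
have : (\rank (first_cols (nu k.+1) X) <= nu k)%N.
  rewrite -(hat_mx_first_cols rk); apply: leq_trans (mxrankM_maxl _ _) _.
  rewrite -[hat_mx _ X]/(P k.+1) Pk.
  by case: (k) => [|k']; [rewrite mxrank0 | exact: rank_hat_mx].
by rewrite rk leqNgt nu_lt.
Qed.

Lemma Dm_idem k : (1 <= k <= M.+1)%N -> Dm k *m Dm k = Dm k.
Proof. by move=> k_range; rewrite Dm_mul // eqxx. Qed.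

Lemma a_m_ge0 (mu : 'cV[R]_n) k : (1 <= k <= M)%N -> 0 <= a_m X nu mu k.
Proof.
move=> /andP[k1 kM]; rewrite /a_m -DmE //.
by apply: form_proj_ge0; [exact: trmx_Dm | rewrite Dm_idem // k1 leqW].
Qed.

Lemma b_m_gt0 (Om : 'M[R]_n) k :
  (forall x : 'cV[R]_n, x != 0 -> 0 < (x^T *m Om *m x) 0 0) ->
  (1 <= k <= M)%N -> 0 < b_m X nu Om k.
Proof.
move=> Om_pd k_range; have /andP[k1 kM] := k_range; rewrite /b_m -DmE //.
apply: mxtrace_proj_mul_gt0; rewrite ?trmx_Dm ?Dm_neq0 //.
by rewrite Dm_idem // k1 leqW.
Qed.

Lemma dim_gt0 : nu 0%N = 0%N -> (1 <= M)%N -> (0 < n)%N.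
Proof.
move=> nu0 M1; have := rank_leq_row (first_cols (nu 1%N) X).
by rewrite rank_cols ?M1 //; have := nu_lt M1; rewrite nu0; lia.
Qed.

Lemma ratio_noninc_of_theta (mu : 'cV[R]_n) (Om : 'M[R]_n) :
  nu 0%N = 0%N ->
  (forall x : 'cV[R]_n, x != 0 -> 0 < (x^T *m Om *m x) 0 0) ->
  (forall m, (1 <= m < M)%N -> theta X nu mu Om m.+1 <= theta X nu mu Om m) ->
  forall k, (1 <= k < M)%N ->
  let a := a_m X nu mu in let b := b_m X nu Om in
  a k.+1 / (a k.+1 + b k.+1) <= a k / (a k + b k).
Proof.
move=> nu0 Om_pd theta_noninc k /andP[k1 kM] /=.
have n_gt0 := dim_gt0 nu0 (leq_trans k1 (ltnW kM)).
have [k_range kS_range] : (1 <= k <= M)%N /\ (1 <= k.+1 <= M)%N.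
  by rewrite k1 kM (ltnW kM).
apply: (@ratio_le_of_scaled _ n%:R); rewrite ?ltr0n ?b_m_gt0 ?a_m_ge0 //.
by apply: theta_noninc; rewrite k1 kM.
Qed.

End NestedModels.

Definition tail_sum (V : nmodType) (N : nat) (w : nat -> V) (k : nat) : V :=
  \sum_(1 <= m < N.+1 | (k <= m)%N) w m.

Lemma tail_sum1 (V : nmodType) N (w : nat -> V) :
  tail_sum N w 1 = \sum_(1 <= m < N.+1) w m.
Proof. by rewrite /tail_sum big_mkcond; apply: eq_big_nat => m /andP[->]. Qed.

Lemma abel_summation (R : pzRingType) (V : lmodType R) (u : nat -> V)
    (w : nat -> R) N : u 0%N = 0 ->
  \sum_(1 <= m < N.+1) w m *: u m =
  \sum_(1 <= k < N.+1) tail_sum N w k *: (u k - u k.-1).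
Proof.
move=> u0; under [RHS]eq_bigr => k _ do rewrite /tail_sum big_mkcond scaler_suml.
rewrite (exchange_big_nat _ _ _ _ _ _ _
  (fun k m => (if (k <= m)%N then w m else 0) *: (u k - u k.-1))) /=.
apply: eq_big_nat => m /andP[m1 mN].
rewrite (big_cat_nat _ (n := m.+1)) //= [X in _ + X]big1_seq ?addr0; last first.
  move=> k /andP[_]; rewrite mem_index_iota ltnNge => /andP[/negbTE -> _].
  by rewrite scale0r.
rewrite (eq_big_nat _ _ (F2 := fun k => w m *: (u k - u k.-1))); last first.
  by move=> k /andP[_]; rewrite ltnS => ->.
rewrite -scaler_sumr (telescope_sumr_eq (fun k => u k.-1)) //.
by rewrite u0 subr0.
Qed.

Section OrthogonalDecomposition.
Variables (R : comPzRingType) (n N0 N1 : nat) (F : nat -> 'M[R]_n).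
Hypotheses (F_sym : forall k, (N0 <= k < N1)%N -> (F k)^T = F k)
  (F_mul : forall j k, (N0 <= j < N1)%N -> (N0 <= k < N1)%N ->
     F j *m F k = if j == k then F j else 0).

Lemma trmx_decomp_mul (c e : nat -> R) :
  (\sum_(N0 <= k < N1) c k *: F k)^T *m (\sum_(N0 <= k < N1) e k *: F k) =
  \sum_(N0 <= k < N1) (c k * e k) *: F k.
Proof.
rewrite (raddf_sum (@trmx R n n)) mulmx_suml; apply: eq_big_nat => j hj.
rewrite mulmx_sumr (eq_big_nat _ _
  (F2 := fun k => if k == j then (c j * e j) *: F j else 0)); last first.
  move=> k hk; rewrite linearZ /= [(c j *: F j)^T]linearZ /= F_sym //.
  rewrite -scalemxAl F_mul // eq_sym.
  by case: eqP => [->|_]; [rewrite scalerA mulrC | rewrite !scaler0].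
by rewrite -big_mkcond big_nat1_eq hj.
Qed.

End OrthogonalDecomposition.

Lemma form_scale_sum (R : comPzRingType) n N0 N1 (u : 'rV[R]_n) (v : 'cV[R]_n)
    (F : nat -> 'M[R]_n) (x : nat -> R) :
  (u *m (\sum_(N0 <= k < N1) x k *: F k) *m v) 0 0 =
  \sum_(N0 <= k < N1) x k * (u *m F k *m v) 0 0.
Proof.
rewrite mulmx_sumr mulmx_suml summxE; apply: eq_bigr => k _.
by rewrite -scalemxAr -scalemxAl mxE.
Qed.

Lemma mxtrace_scale_sum (R : comPzRingType) n N0 N1 (Om : 'M[R]_n)
    (F : nat -> 'M[R]_n) (x : nat -> R) :
  \tr ((\sum_(N0 <= k < N1) x k *: F k) *m Om) =
  \sum_(N0 <= k < N1) x k * \tr (F k *m Om).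
Proof.
rewrite mulmx_suml (raddf_sum (@mxtrace R n)); apply: eq_bigr => k _.
by rewrite -scalemxAl; exact: mxtraceZ.
Qed.

Section Expectation.
Variables (R : realType) (d : measure_display) (T : measurableType d)
  (P : probability T R).

Definition has_expectation (f : T -> R) (r : R) : Prop :=
  f \in Lfun P 1 /\ 'E_P[f]%E = r%:E.

Lemma has_expectation_cst r : has_expectation (cst r) r.
Proof. by split; [exact: Lfun_cst | exact: expectation_cst]. Qed.

Lemma has_expectationD f g r s : has_expectation f r -> has_expectation g s ->
  has_expectation (f \+ g) (r + s).
Proof.
by move=> [fL fE] [gL gE]; split; [exact: rpredD | rewrite expectationD // fE gE].
Qed.

Lemma has_expectationZ a f r : has_expectation f r ->
  has_expectation (fun om => a * f om) (a * r).
Proof.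
move=> [fL fE].
have -> : (fun om => a * f om) = a \o* f by apply/funext => om /=; rewrite mulrC.
by split; [exact: Lfun_scale | rewrite expectationZl // fE].
Qed.

Lemma has_expectation_sum (I : finType) (F : I -> T -> R) (r : I -> R) :
  (forall i, has_expectation (F i) (r i)) ->
  has_expectation (fun om => \sum_i F i om) (\sum_i r i).
Proof.
move=> hF; rewrite -fct_sumE.
apply: (big_rec2 has_expectation); first exact: has_expectation_cst.
by move=> i f s _; apply: has_expectationD.
Qed.

End Expectation.

Section CenteredNoise.
Variables (R : realType) (d : measure_display) (T : measurableType d)
  (P : probability T R) (n : nat) (eps : 'I_n -> {RV P >-> R}) (Om : 'M[R]_n).
Hypotheses (eps_L2 : forall i, (eps i : T -> R) \in Lfun P 2)
  (eps_mean0 : forall i, 'E_P[eps i]%E = 0%:E)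
  (eps_cov : forall i j, covariance P (eps i) (eps j) = (Om i j)%:E).

Lemma has_expectation_noise i : has_expectation P (eps i) 0.
Proof. by split; [apply: (Lfun_subset12 _ (eps_L2 i)); rewrite fin_num_measure |]. Qed.

Lemma has_expectation_noiseM i j :
  has_expectation P (fun om => eps i om * eps j om) (Om i j).
Proof.
split; first exact: (Lfun2_mul_Lfun1 (eps_L2 i) (eps_L2 j)).
rewrite -eps_cov covariance.unlock !eps_mean0 /=; congr expectation.
by apply/funext => om; rewrite mulrfctE /= !subr0.
Qed.

Lemma expectation_sqnorm_affine (c : 'cV[R]_n) (B : 'M[R]_n) :
  'E_P[fun om => (\sum_(i < n) ((c + B *m \col_j eps j om) i 0) ^+ 2)%R]%E =
  ((c^T *m c) 0 0 + \tr (B *m Om *m B^T))%:E.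
Proof.
pose f om := \sum_(i < n) (c i 0 ^+ 2 + (\sum_(j < n) (2 * c i 0 * B i j) * eps j om
     + \sum_(j < n) \sum_(k < n) (B i j * B i k) * (eps j om * eps k om))).
have -> : (fun om => \sum_(i < n) ((c + B *m \col_j eps j om) i 0) ^+ 2) = f.
  apply/funext => om; apply: eq_bigr => i _.
  rewrite !mxE sqrrD (expr2 (\sum_j _)) mulr_suml -addrA; congr (_ + (_ + _)).
    rewrite -mulr_natr mulr_sumr mulr_suml; apply: eq_bigr => j _.
    by rewrite !mxE; ring.
  apply: eq_bigr => j _; rewrite mulr_sumr; apply: eq_bigr => k _.
  by rewrite !mxE; ring.
have [_ ->] : has_expectation P f (\sum_(i < n) (c i 0 ^+ 2 +
    (\sum_(j < n) 2 * c i 0 * B i j * 0 +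
     \sum_(j < n) \sum_(k < n) B i j * B i k * Om j k))).
  apply: has_expectation_sum => i; apply: has_expectationD.
    exact: has_expectation_cst.
  apply: has_expectationD; apply: has_expectation_sum => j.
    exact/has_expectationZ/has_expectation_noise.
  by apply: has_expectation_sum => k; exact/has_expectationZ/has_expectation_noiseM.
congr (_%:E); rewrite big_split; congr (_ + _).
  by rewrite [RHS]mxE; apply: eq_bigr => i _; rewrite !mxE expr2.
rewrite /mxtrace; apply: eq_bigr => i _.
rewrite big1 ?add0r => [|j _]; last by rewrite mulr0.
rewrite mxE; under [RHS]eq_bigr => k _ do rewrite !mxE mulr_suml.
rewrite [RHS]exchange_big /=; apply: eq_bigr => j _.
by apply: eq_bigr => k _; ring.
Qed.

End CenteredNoise.

Definition separable_risk (R : pzRingType) (a b : nat -> R) (M : nat)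
    (w : nat -> R) : R :=
  \sum_(1 <= k < M.+1) ((1 - tail_sum M w k) ^+ 2 * a k + tail_sum M w k ^+ 2 * b k).

Section RiskDecomposition.
Variables (R : realType) (d : measure_display) (T : measurableType d)
  (P : probability T R) (n p M : nat) (X : 'M[R]_(n, p)) (nu : nat -> nat)
  (mu : 'cV[R]_n) (eps : 'I_n -> {RV P >-> R}) (Om : 'M[R]_n).
Hypotheses (eps_L2 : forall i, (eps i : T -> R) \in Lfun P 2)
  (eps_mean0 : forall i, 'E_P[eps i]%E = 0%:E)
  (eps_cov : forall i j, covariance P (eps i) (eps j) = (Om i j)%:E)
  (nu_lt : forall m, (m < M)%N -> (nu m < nu m.+1)%N)
  (rank_cols : forall m, (1 <= m <= M)%N -> \rank (first_cols (nu m) X) = nu m).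
Local Notation D := (Dm X nu M).

Lemma risk_separable w : risk X nu M mu eps w =
  (separable_risk (a_m X nu mu) (b_m X nu Om) M w
   + (mu^T *m (1%:M - Pm X nu M) *m mu) 0 0)%:E.
Proof.
pose A := \sum_(1 <= m < M.+1) w m *: Pm X nu m.
pose G k := if (k <= M)%N then tail_sum M w k else 0.
have A_decomp : A = \sum_(1 <= k < M.+2) G k *: D k.
  rewrite big_nat_recr //= /G ltnn scale0r addr0 /A.
  rewrite (abel_summation _ (u := Pm X nu)) //.
  by apply: eq_big_nat => k /andP[_]; rewrite ltnS => kM; rewrite kM DmE.
have A1_decomp : A - 1%:M = \sum_(1 <= k < M.+2) (G k - 1) *: D k.
  under eq_bigr => k _ do rewrite scalerBl scale1r.
  by rewrite sumrB -A_decomp sum_Dm.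
have A_sym : A^T = A.
  rewrite (raddf_sum (@trmx R n n)); apply: eq_bigr => m _.
  by change ((w m *: Pm X nu m)^T = w m *: Pm X nu m); rewrite linearZ /= trmx_Pm.
have decomp_mul := @trmx_decomp_mul R n 1 M.+2 D (fun k _ => trmx_Dm X nu M k)
  (Dm_mul nu_lt rank_cols).
rewrite /risk.
have -> : (fun om => \sum_(i < n)
    ((avg_est X nu M w (yvec mu eps om) - mu) i 0) ^+ 2) =
  (fun om => \sum_(i < n) (((A - 1%:M) *m mu + A *m \col_j eps j om) i 0) ^+ 2).
  apply/funext => om; apply: eq_bigr => i _; congr (_ i 0 ^+ 2).
  have -> : avg_est X nu M w (yvec mu eps om) = A *m yvec mu eps om.
    by rewrite /A mulmx_suml; apply: eq_bigr => m _; rewrite scalemxAl.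
  by rewrite mulmxDr mulmxBl mul1mx addrAC.
rewrite (expectation_sqnorm_affine eps_L2 eps_mean0 eps_cov); congr (_%:E).
have quad_form : ((A - 1%:M) *m mu)^T *m ((A - 1%:M) *m mu) =
    mu^T *m ((A - 1%:M)^T *m (A - 1%:M)) *m mu by rewrite trmx_mul !mulmxA.
have trace_form : \tr (A *m Om *m A^T) = \tr (A^T *m A *m Om).
  by rewrite A_sym mxtrace_mulC mulmxA.
rewrite quad_form trace_form A1_decomp decomp_mul A_decomp decomp_mul.
rewrite form_scale_sum mxtrace_scale_sum big_nat_recr //=.
rewrite [X in _ + X = _]big_nat_recr //= /G ltnn Dm_complement.
rewrite /separable_risk big_split /= !mul0r addr0 sub0r mulrNN mulr1 mul1r addrAC.
congr (_ + _ + _); apply: eq_big_nat => k /andP[_]; rewrite ltnS => kM.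
  by rewrite kM /a_m -(DmE X nu kM) -expr2 -(sqrrN (_ - 1)) opprB.
by rewrite kM /b_m -(DmE X nu kM) -expr2.
Qed.

End RiskDecomposition.

Definition incr_weights (R : zmodType) (M : nat) (g : nat -> R) (m : nat) : R :=
  if (m < M)%N then g m - g m.+1 else g M.

Lemma tail_sum_incr_weights (R : zmodType) M (g : nat -> R) k : (1 <= k <= M)%N ->
  tail_sum M (incr_weights M g) k = g k.
Proof.
move=> /andP[k1 kM]; rewrite /tail_sum (big_cat_nat _ (n := k)) //=; last first.
  exact: leq_trans kM _.
rewrite big1_seq ?add0r => [|m /andP[km]]; last first.
  by rewrite mem_index_iota => /andP[_]; rewrite ltnNge km.
rewrite big_mkcond big_nat_recr //= kM /incr_weights ltnn (eq_big_nat _ _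
  (F2 := fun m => - (g m.+1 - g m))) => [|m /andP[-> ->]]; last by rewrite opprB.
by rewrite sumrN telescope_sumr // opprB subrK.
Qed.

Lemma incr_weights_inQ (R : realType) M (g : nat -> R) :
  (forall k, (1 <= k < M)%N -> g k.+1 <= g k) ->
  (forall k, (1 <= k <= M)%N -> 0 <= g k <= 1) ->
  inQ M (incr_weights M g).
Proof.
move=> g_noninc g01 m /andP[m1 mM]; rewrite /incr_weights.
case: ltnP => [mM'|_]; last by apply: g01; rewrite (leq_trans m1 mM) leqnn.
have := g_noninc m; have := g01 m; have := g01 m.+1; rewrite m1 mM mM' /=.
by move=> /(_ isT) /andP[? ?] /(_ isT) /andP[? ?] /(_ isT) ?; apply/andP; split; lra.
Qed.

Section SeparableRiskMinimum.
Variables (R : realType) (a b : nat -> R) (M : nat).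
Hypotheses (a_ge0 : forall k, (1 <= k <= M)%N -> 0 <= a k)
  (b_gt0 : forall k, (1 <= k <= M)%N -> 0 < b k)
  (ratio_noninc : forall k, (1 <= k < M)%N ->
     a k.+1 / (a k.+1 + b k.+1) <= a k / (a k + b k)).
Local Notation ratio k := (a k / (a k + b k)).
Local Notation harmonic k := (a k * b k / (a k + b k)).
Local Notation gamma := (fun k => if (k <= 1)%N then 1 else ratio k).

Lemma separable_risk_ge w :
  \sum_(1 <= k < M.+1) harmonic k <= separable_risk a b M w.
Proof.
apply: ler_sum_nat => k k_range.
by apply: harmonic_le_quad; [exact: a_ge0 | exact: b_gt0].
Qed.

Lemma ratio_in01_at k : (1 <= k <= M)%N -> 0 <= ratio k <= 1.
Proof. by move=> k_range; apply: ratio_in01; [exact: a_ge0 | exact: b_gt0]. Qed.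

Lemma separable_risk_min_Q :
  exists2 w, inQ M w & separable_risk a b M w = \sum_(1 <= k < M.+1) harmonic k.
Proof.
exists (incr_weights M (fun k => ratio k)).
  exact: incr_weights_inQ ratio_noninc ratio_in01_at.
apply: eq_big_nat => k k_range; rewrite tail_sum_incr_weights //.
by apply: quad_at_ratio; [exact: a_ge0 | exact: b_gt0].
Qed.

Lemma separable_risk_sum1 w : (1 <= M)%N -> \sum_(1 <= m < M.+1) w m = 1 ->
  separable_risk a b M w = b 1%N + \sum_(2 <= k < M.+1)
    ((1 - tail_sum M w k) ^+ 2 * a k + tail_sum M w k ^+ 2 * b k).
Proof.
move=> M1 w_sum1; rewrite /separable_risk big_ltn // tail_sum1 w_sum1.
by rewrite subrr expr0n mul0r add0r expr1n mul1r.
Qed.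

Lemma separable_risk_ge_W w : (1 <= M)%N -> inW M w ->
  b 1%N + \sum_(2 <= k < M.+1) harmonic k <= separable_risk a b M w.
Proof.
move=> M1 [_ w_sum1]; rewrite separable_risk_sum1 // lerD2l.
apply: ler_sum_nat => k /andP[k2 kM].
by apply: harmonic_le_quad; [apply: a_ge0 | apply: b_gt0]; rewrite (ltnW k2).
Qed.

Lemma separable_risk_min_W : (2 <= M)%N ->
  inW M (incr_weights M gamma) /\
  separable_risk a b M (incr_weights M gamma) =
    b 1%N + \sum_(2 <= k < M.+1) harmonic k.
Proof.
move=> M2; have M1 : (1 <= M)%N by exact: ltnW.
have gamma_noninc k : (1 <= k < M)%N -> gamma k.+1 <= gamma k.
  case: k => [//|[|k]] k_range /=; last exact: ratio_noninc.
  by case/andP: (ratio_in01_at (k := 2) M2).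
have gamma_in01 k : (1 <= k <= M)%N -> 0 <= gamma k <= 1.
  by case: k => [//|[|k]] k_range /=; [rewrite ler01 lexx | exact: ratio_in01_at].
have tails k : (1 <= k <= M)%N -> tail_sum M (incr_weights M gamma) k = gamma k.
  exact: tail_sum_incr_weights.
have w_sum1 : \sum_(1 <= m < M.+1) incr_weights M gamma m = 1.
  by rewrite -tail_sum1 tails ?M1.
split; first by split; [exact: incr_weights_inQ | exact: w_sum1].
rewrite separable_risk_sum1 //; congr (_ + _).
apply: eq_big_nat => k /andP[k2 kM]; rewrite tails ?(ltnW k2) //.
case: k k2 kM => [//|[//|k]] _ kM /=.
by apply: quad_at_ratio; [apply: a_ge0 | apply: b_gt0]; exact: kM.
Qed.

End SeparableRiskMinimum.

Theorem mainTheorem13 (R : realType) (d : measure_display) (T : measurableType d)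
  (P : probability T R) (n p M : nat) (X : 'M[R]_(n, p)) (nu : nat -> nat)
  (mu : 'cV[R]_n) (eps : 'I_n -> {RV P >-> R}) (Om : 'M[R]_n) :
  (forall i, (eps i : T -> R) \in Lfun P 2) ->
  (forall i, 'E_P[eps i]%E = 0%:E) ->
  (forall i j, covariance P (eps i) (eps j) = (Om i j)%:E) ->
  Om^T = Om ->
  (forall x : 'cV[R]_n, x != 0 -> 0 < (x^T *m Om *m x) 0 0) ->
  (2 <= M)%N ->
  nu 0%N = 0%N ->
  (forall m, (m < M)%N -> (nu m < nu m.+1)%N) ->
  (nu M <= p)%N ->
  (forall m, (1 <= m <= M)%N -> \rank (first_cols (nu m) X) = nu m) ->
  (forall m, (1 <= m < M)%N -> theta X nu mu Om m.+1 <= theta X nu mu Om m) ->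
  let a := a_m X nu mu in
  let b := b_m X nu Om in
  let Rn := risk X nu M mu eps in
  let t1 := \tr (Pm X nu 1 *m Om) in
  let bias := (mu^T *m (1%:M - Pm X nu M) *m mu) 0 0 in
  let VW := t1 + \sum_(2 <= m < M.+1) (a m * b m / (a m + b m)) + bias in
  let VQ := \sum_(1 <= m < M.+1) (a m * b m / (a m + b m)) + bias in
  [/\ inW M (wstar X nu mu Om M) /\ Rn (wstar X nu mu Om M) = VW%:E
        /\ (forall w, inW M w -> (VW%:E <= Rn w)%E),
      (exists2 w, inQ M w & Rn w = VQ%:E)
        /\ (forall w, inQ M w -> (VQ%:E <= Rn w)%E)
    & VW - VQ = t1 ^+ 2 / ((mu^T *m Pm X nu 1 *m mu) 0 0 + t1)
        /\ t1 ^+ 2 / ((mu^T *m Pm X nu 1 *m mu) 0 0 + t1) <= t1].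
Proof.
move=> eps_L2 eps_mean0 eps_cov _ Om_pd M2 nu0 nu_lt _ rank_cols theta_noninc
  a b Rn t1 bias VW VQ.
have a_ge0 k : (1 <= k <= M)%N -> 0 <= a k by exact: a_m_ge0.
have b_gt0 k : (1 <= k <= M)%N -> 0 < b k by exact: b_m_gt0.
have ratio_noninc := ratio_noninc_of_theta nu_lt rank_cols nu0 Om_pd theta_noninc.
have Rn_sep w : Rn w = (separable_risk a b M w + bias)%:E.
  exact: risk_separable.
have t1_b1 : t1 = b 1%N by rewrite /t1 /b /b_m /= subr0.
have a1E : (mu^T *m Pm X nu 1 *m mu) 0 0 = a 1%N by rewrite /a /a_m /= subr0.
have one_range : (1 <= 1 <= M)%N by rewrite leqnn (ltnW M2).
have [a1_ge0 b1_gt0] := (a_ge0 _ one_range, b_gt0 _ one_range).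
split.
- have [wW RwW] := separable_risk_min_W a_ge0 b_gt0 ratio_noninc M2.
  split; [exact: wW | split; first by rewrite Rn_sep RwW /VW t1_b1].
  move=> w w_in; rewrite Rn_sep lee_fin /VW t1_b1 lerD2r.
  exact: separable_risk_ge_W.
- have [w wQ Rw] := separable_risk_min_Q a_ge0 b_gt0 ratio_noninc.
  split; first by exists w; rewrite // Rn_sep Rw.
  by move=> w' _; rewrite Rn_sep lee_fin lerD2r separable_risk_ge.
- rewrite a1E t1_b1; split; last exact: harmonic_gap_le.
  rewrite -harmonic_gap // /VW /VQ [\sum_(1 <= m < M.+1) _]big_ltn // t1_b1.
  by ring.
Qed.
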